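(* Let $m\ge2$, $1\le i\le m-1$, and let $f(z)=f(z_1,\dots,z_m)$ be a rational function over $\mathbb Q(q,t)$ which is antisymmetric in $z_i$ and $z_{i+1}$. Then \[ \mathbf H^m_{q,t}\bigl(\Omega[M\,z_i/z_{i+1}]\,f(z)\bigr)=0,\qquad\text{where } \Omega[Mz]=\frac{(1-qz)(1-tz)}{(1-z)(1-qtz)}. \]
   Context: $M=(1-q)(1-t)$. For a rational function $g(z_1,\dots,z_m)$, $\boldsymbol\sigma(g)=\sum_{w\in S_m}w\bigl(g/\prod_{j<k}(1-z_k/z_j)\bigr)$ ($S_m$ permuting the variables) and \[ \mathbf H^m_{q,t}(g)=\boldsymbol\sigma\Bigl(g\,\frac{\prod_{j<k}(1-qt\,z_j/z_k)}{\prod_{j<k}(1-q\,z_j/z_k)(1-t\,z_j/z_k)}\Bigr), \] a symmetric rational function. *)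

From HB Require Import structures.
From mathcomp Require Import all_boot all_order all_algebra all_fingroup.
From mathcomp Require Import fraction.
From mathcomp Require Import mpoly.
Set Implicit Arguments. Unset Strict Implicit. Unset Printing Implicit Defensive.
Import Order.TTheory GRing.Theory.
Local Open Scope ring_scope.

Notation tofrac := (@FracField.tofrac _).
Local Notation "x %:F" := (tofrac x).

Definition Qqt : fieldType := {fraction {mpoly rat[2]}}.
Definition qq : Qqt := ('X_(@ord0 1) : {mpoly rat[2]})%:F.
Definition tt_ : Qqt := ('X_(@ord_max 1) : {mpoly rat[2]})%:F.

(* Rational functions in z_1..z_m (0-indexed z_0..z_{m-1}) over Q(q,t). *)
Definition RF (m : nat) : fieldType := {fraction {mpoly Qqt[m]}}.

Definition zv (m : nat) (j : 'I_m) : RF m := ('X_j : {mpoly Qqt[m]})%:F.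
Definition cst (m : nat) (c : Qqt) : RF m := (c%:MP : {mpoly Qqt[m]})%:F.

(* Action of w in S_m on rational functions: z_j |-> z_(w j),
   applied to numerator and denominator of a representative. *)
Definition zact (m : nat) (w : 'S_m) (f : RF m) : RF m :=
  (msym w (\n_(generic_quotient.repr f)))%:F / (msym w (\d_(generic_quotient.repr f)))%:F.

Definition sigma (m : nat) (g : RF m) : RF m :=
  \sum_(w : 'S_m)
     zact w (g / \prod_(j < m) \prod_(k < m | (j < k)%N) (1 - zv k / zv j)).

Definition Hqt (m : nat) (g : RF m) : RF m :=
  sigma (g * \prod_(j < m) \prod_(k < m | (j < k)%N)
          ((1 - cst m (qq * tt_) * (zv j / zv k)) /
           ((1 - cst m qq * (zv j / zv k)) * (1 - cst m tt_ * (zv j / zv k))))).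

Definition OmegaM (m : nat) (x : RF m) : RF m :=
  ((1 - cst m qq * x) * (1 - cst m tt_ * x)) /
  ((1 - x) * (1 - cst m (qq * tt_) * x)).

(* The transposition s = (i i+1) maps the summand F of H^m_{q,t} to -F.  Indeed,
   with y = z_i/z_{i+1}, the factor Omega[M y] cancels the (i, i+1) factor of the
   q,t-kernel up to 1/(1 - y), so that F = f * Q * 1/((1 - y)(1 - 1/y)), where Q, the
   product of the remaining pair factors, is s-invariant (s permutes those pairs),
   1/((1 - y)(1 - 1/y)) is invariant under y <-> 1/y, and f is s-antisymmetric.
   Reindexing the sum over S_m by w |-> s w then gives H = -H, so H = 0 since
   2 != 0 in Q(q,t)(z). *)

From HB Require Import structures.
From mathcomp Require Import all_boot all_order all_algebra all_fingroup.
From mathcomp Require Import fraction generic_quotient mpoly ring zify.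
Set Implicit Arguments. Unset Strict Implicit. Unset Printing Implicit Defensive.
Import GRing.Theory.
Local Open Scope ring_scope.
Local Notation "x %:F" := (@FracField.tofrac _ x).

Lemma tofrac_repr (R : idomainType) (x : {fraction R}) :
  x = (\n_(repr x))%:F / (\d_(repr x))%:F.
Proof.
set r := repr x; have dF_neq0 : (\d_r)%:F != 0 by rewrite tofrac_eq0 denom_ratioP.
apply: (mulIf dF_neq0); rewrite divfK // -[x]reprK -/r.
unlock FracField.tofrac; rewrite -[_ * _](FracField.pi_mul r (Ratio \d_r 1)).
apply/eqP; rewrite FracField.equivf_def /FracField.mulf.
by rewrite !numden_Ratio ?mulf_neq0 ?oner_neq0 ?denom_ratioP // !mulr1 mulrC.
Qed.

Lemma tofrac_divB (R : idomainType) (a b c d : R) : b != 0 -> d != 0 ->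
  a%:F / b%:F - c%:F / d%:F = (a * d - c * b)%:F / (b * d)%:F.
Proof.
move=> b_neq0 d_neq0; rewrite -mulNr -rmorphN addf_div ?tofrac_eq0 //.
by rewrite -!rmorphM -rmorphD /= mulNr.
Qed.

Lemma tofrac_divM (R : idomainType) (a b c d : R) :
  a%:F / b%:F * (c%:F / d%:F) = (a * c)%:F / (b * d)%:F.
Proof. by rewrite mulf_div -!rmorphM. Qed.

(* Independent of the representative of x as soon as phi is injective (frac_map_div). *)
Definition frac_map (R S : idomainType) (phi : R -> S) (x : {fraction R}) : {fraction S} :=
  (phi (\n_(repr x)))%:F / (phi (\d_(repr x)))%:F.

Section FracMap.
Variables (R S : idomainType) (phi : {rmorphism R -> S}).
Hypothesis phi_inj : injective phi.

Lemma tofrac_phi_eq0 a : ((phi a)%:F == 0) = (a == 0).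
Proof. by rewrite tofrac_eq0 -(rmorph0 phi) (inj_eq phi_inj). Qed.

Lemma frac_map_div a b : frac_map phi (a%:F / b%:F) = (phi a)%:F / (phi b)%:F.
Proof.
have [-> | b_neq0] := eqVneq b 0.
  rewrite !rmorph0 !invr0 !mulr0 /frac_map.
  move: (tofrac_repr (0 : {fraction R})) => /esym/eqP.
  rewrite mulf_eq0 invr_eq0 !tofrac_eq0 (negbTE (denom_ratioP _)) orbF => /eqP ->.
  by rewrite !rmorph0 mul0r.
rewrite /frac_map; set r := repr _.
have bF_neq0 : b%:F != 0 by rewrite tofrac_eq0.
have dF_neq0 : (\d_r)%:F != 0 by rewrite tofrac_eq0 denom_ratioP.
have cross : a * \d_r = \n_r * b.
  by apply/eqP; rewrite -tofrac_eq !rmorphM /= -eqr_div // -tofrac_repr.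
apply/eqP; rewrite eqr_div ?tofrac_phi_eq0 ?denom_ratioP //.
by rewrite -!rmorphM /= cross.
Qed.

Lemma frac_map_tofrac a : frac_map phi a%:F = (phi a)%:F.
Proof. by rewrite -[a%:F]divr1 -tofrac1 frac_map_div rmorph1 tofrac1 divr1. Qed.

Lemma frac_map_is_zmod_morphism : zmod_morphism (frac_map phi).
Proof.
move=> x y; rewrite [x]tofrac_repr [y]tofrac_repr.
have [dx_neq0 dy_neq0] := (denom_ratioP (repr x), denom_ratioP (repr y)).
rewrite tofrac_divB // !frac_map_div tofrac_divB -?(rmorph0 phi) ?(inj_eq phi_inj) //.
by rewrite rmorphB !rmorphM.
Qed.

Lemma frac_map_is_monoid_morphism : monoid_morphism (frac_map phi).
Proof.
split=> [|x y]; first by rewrite -tofrac1 frac_map_tofrac rmorph1 tofrac1.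
by rewrite [x]tofrac_repr [y]tofrac_repr tofrac_divM !frac_map_div tofrac_divM !rmorphM.
Qed.

End FracMap.

Lemma frac_map_comp (R S T : idomainType) (phi : R -> S) (psi : {rmorphism S -> T}) :
  injective psi -> forall x, frac_map psi (frac_map phi x) = frac_map (psi \o phi) x.
Proof. by move=> psi_inj x; rewrite [frac_map phi x]/frac_map frac_map_div. Qed.

HB.instance Definition _ (m : nat) (w : 'S_m) :=
  GRing.isZmodMorphism.Build (RF m) (RF m) (zact w)
    (frac_map_is_zmod_morphism (@inj_msym m Qqt w)).
HB.instance Definition _ (m : nat) (w : 'S_m) :=
  GRing.isMonoidMorphism.Build (RF m) (RF m) (zact w)
    (frac_map_is_monoid_morphism (@inj_msym m Qqt w)).

Section PermutationAction.
Variable m : nat.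
Implicit Types (w : 'S_m) (j k : 'I_m) (x : RF m).

Lemma zact_tofrac w p : zact w p%:F = (msym w p)%:F.
Proof. exact: (frac_map_tofrac (@inj_msym m Qqt w)). Qed.

Lemma zactMg w1 w2 x : zact w2 (zact w1 x) = zact (w1 * w2)%g x.
Proof.
rewrite [LHS]frac_map_comp; last exact: inj_msym.
by rewrite /zact /frac_map /= !msymMm.
Qed.

Lemma zact_zv w j : zact w (zv j) = zv (w j).
Proof. by rewrite zact_tofrac /msym mmapX mmap1U. Qed.

Lemma zact_cst w c : zact w (cst m c) = cst m c.
Proof. by rewrite zact_tofrac /msym mmapC. Qed.

Lemma zv_neq0 j : zv j != 0.
Proof.
rewrite /zv tofrac_eq0; apply/eqP => /(congr1 (mcoeff U_(j))).
by rewrite mcoeffXU eqxx mcoeff0 => /eqP; rewrite oner_eq0.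
Qed.

Lemma zact_zv_div w j k : zact w (zv j / zv k) = zv (w j) / zv (w k).
Proof. by rewrite fmorph_div /= !zact_zv. Qed.

Lemma one_sub_cst_zv_neq0 c j k : j != k -> 1 - cst m c * (zv j / zv k) != 0.
Proof.
move=> j_neq_k; rewrite subr_eq0; apply/eqP => E.
have : zv k = cst m c * zv j by rewrite -[LHS]mul1r E -mulrA divfK ?zv_neq0.
rewrite /zv /cst -rmorphM => /eqP; rewrite tofrac_eq => /eqP /(congr1 (mcoeff U_(k))).
rewrite mul_mpolyC mcoeffZ !mcoeffXU eqxx (negbTE j_neq_k) mulr0 => /eqP.
by rewrite oner_eq0.
Qed.

Lemma natr_RF_eq0 n : ((n%:R : RF m) == 0) = (n == 0)%N.
Proof.
rewrite -(rmorph_nat (@FracField.tofrac _)) tofrac_eq0 -(rmorph_nat (@mpolyC m Qqt)).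
rewrite mpolyC_eq0 -(rmorph_nat (@FracField.tofrac _)) tofrac_eq0.
by rewrite -(rmorph_nat (@mpolyC 2 rat)) mpolyC_eq0 Num.Theory.pnatr_eq0.
Qed.

End PermutationAction.

Definition pair_prod (K : comRingType) (m : nat) (h : 'I_m -> 'I_m -> K) : K :=
  \prod_(j < m) \prod_(k < m | (j < k)%N) h j k.

Definition pair_prod_without (K : comRingType) (m : nat) (h : 'I_m -> 'I_m -> K)
    (j0 k0 : 'I_m) : K :=
  \prod_(p : 'I_m * 'I_m | (p.1 < p.2)%N && (p != (j0, k0))) h p.1 p.2.

Lemma pair_prod_split (K : comRingType) (m : nat) (h : 'I_m -> 'I_m -> K) (j0 k0 : 'I_m) :
  (j0 < k0)%N -> pair_prod h = h j0 k0 * pair_prod_without h j0 k0.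
Proof. by move=> lt_j0k0; rewrite /pair_prod pair_big_dep (bigD1 (j0, k0)). Qed.

Section AdjacentTransposition.
Variables (m : nat) (i0 i1 : 'I_m).
Hypothesis adj : i1 = i0.+1 :> nat.
Local Notation s := (tperm i0 i1).

Lemma tperm_adj_pair j k :
  ((s j < s k)%N && ((s j, s k) != (i0, i1))) = ((j < k)%N && ((j, k) != (i0, i1))).
Proof.
rewrite !xpair_eqE -!val_eqE /=.
case: tpermP => [-> | -> | ? ?]; case: tpermP => [-> | -> | ? ?];
repeat match goal with H : is_true (_ != _) |- _ => move: H end;
rewrite -?val_eqE /= adj; lia.
Qed.

Lemma pair_prod_without_tperm (K : comRingType) (h : 'I_m -> 'I_m -> K) :
  pair_prod_without (fun j k => h (s j) (s k)) i0 i1 = pair_prod_without h i0 i1.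
Proof.
rewrite [RHS](reindex_inj (h := fun p : 'I_m * 'I_m => (s p.1, s p.2))) /=; last first.
  by move=> [a b] [c d] /= [/perm_inj -> /perm_inj ->].
by apply: eq_bigl => -[j k]; rewrite tperm_adj_pair.
Qed.

End AdjacentTransposition.

Lemma sum_group_anti_eq0 (gT : finGroupType) (K : idomainType) (a : gT -> K) (s : gT) :
  2%:R != 0 :> K -> (forall w, a (s * w)%g = - a w) -> \sum_w a w = 0.
Proof.
move=> two_neq0 anti; have : \sum_w a w = - \sum_w a w.
  by rewrite [LHS](reindex_inj (mulgI s)) -sumrN; apply: eq_bigr => w _; exact: anti.
move/eqP; rewrite -subr_eq0 opprK -mulr2n -mulr_natr mulf_eq0 (negbTE two_neq0) orbF.
by move/eqP.
Qed.

Lemma divf_mul_divK (F : fieldType) (x c d : F) :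
  x != 0 -> d != 0 -> x / (c * d) * (d / x) = c^-1.
Proof.
move=> x_neq0 d_neq0; have [-> | c_neq0] := eqVneq c 0.
  by rewrite mul0r invr0 mulr0 mul0r.
by field; rewrite x_neq0 d_neq0 c_neq0.
Qed.

Definition hqt (m : nat) (y : RF m) : RF m :=
  (1 - cst m (qq * tt_) * y) / ((1 - cst m qq * y) * (1 - cst m tt_ * y)).

Section Hqt.
Variable m : nat.
Implicit Types (g y : RF m) (w : 'S_m).

Local Notation hqt_pair := (fun j k : 'I_m => hqt (zv j / zv k)).
Local Notation vdm_pair := (fun j k : 'I_m => 1 - zv k / zv j).

Lemma HqtE g :
  Hqt g = \sum_(w : 'S_m) zact w (g * pair_prod hqt_pair / pair_prod vdm_pair).
Proof. by []. Qed.

Lemma zact_hqt w y : zact w (hqt y) = hqt (zact w y).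
Proof.
by rewrite /hqt fmorph_div /= !rmorphM /= !rmorphB /= !rmorphM /= rmorph1 !zact_cst.
Qed.

Lemma OmegaM_mul_hqt y :
  1 - cst m qq * y != 0 -> 1 - cst m tt_ * y != 0 -> 1 - cst m (qq * tt_) * y != 0 ->
  OmegaM y * hqt y = (1 - y)^-1.
Proof.
rewrite /OmegaM /hqt => qy_neq0 ty_neq0 qty_neq0.
exact: divf_mul_divK (mulf_neq0 qy_neq0 ty_neq0) qty_neq0.
Qed.

Lemma Hqt_summand_split (j0 k0 : 'I_m) g : (j0 < k0)%N ->
  let y := zv j0 / zv k0 in
  OmegaM y * g * pair_prod hqt_pair / pair_prod vdm_pair =
  g * (pair_prod_without hqt_pair j0 k0 / pair_prod_without vdm_pair j0 k0) *
  ((1 - y) * (1 - y^-1))^-1.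
Proof.
move=> lt_j0k0 y; have j0_neq_k0 : j0 != k0 by rewrite -val_eqE neq_ltn lt_j0k0.
have kernel : OmegaM y * hqt y = (1 - y)^-1.
  by apply: OmegaM_mul_hqt; apply: one_sub_cst_zv_neq0.
have vdm_y : 1 - zv k0 / zv j0 = 1 - y^-1 by rewrite invf_div.
rewrite !(pair_prod_split _ lt_j0k0) vdm_y !invfM -kernel; ring.
Qed.

Lemma zact_tperm_pair_prod_without (i0 i1 : 'I_m) (h : 'I_m -> 'I_m -> RF m) :
  i1 = i0.+1 :> nat -> (forall w j k, zact w (h j k) = h (w j) (w k)) ->
  zact (tperm i0 i1) (pair_prod_without h i0 i1) = pair_prod_without h i0 i1.
Proof.
move=> adj h_equiv; rewrite rmorph_prod; under eq_bigr do rewrite /= h_equiv.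
exact: pair_prod_without_tperm.
Qed.

Lemma zact_tperm_Hqt_summand (i0 i1 : 'I_m) f :
  i1 = i0.+1 :> nat -> zact (tperm i0 i1) f = - f ->
  let F := OmegaM (zv i0 / zv i1) * f * pair_prod hqt_pair / pair_prod vdm_pair in
  zact (tperm i0 i1) F = - F.
Proof.
move=> adj f_anti F; have lt_i01 : (i0 < i1)%N by rewrite adj.
have zact_y : zact (tperm i0 i1) (zv i0 / zv i1) = (zv i0 / zv i1)^-1.
  by rewrite zact_zv_div tpermL tpermR invf_div.
rewrite /F Hqt_summand_split // !rmorphM /= f_anti !fmorphV /=.
rewrite (zact_tperm_pair_prod_without (h := hqt_pair) adj); last first.
  by move=> w j k; rewrite zact_hqt zact_zv_div.
rewrite (zact_tperm_pair_prod_without (h := vdm_pair) adj); last first.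
  by move=> w j k; rewrite rmorphB /= rmorph1 zact_zv_div.
rewrite rmorphM /= !rmorphB /= rmorph1 fmorphV /= zact_y invrK.
by rewrite [X in _ / X]mulrC !mulNr.
Qed.

End Hqt.

(* 0-indexed: i, i+1 correspond to the paper's z_{i+1}, z_{i+2}. *)
Theorem lemma4p2p2 (m : nat) (hm : (2 <= m)%N) (i : nat) (hi : (i.+1 < m)%N)
  (f : RF m) :
  let i0 : 'I_m := Ordinal (ltnW hi) in
  let i1 : 'I_m := Ordinal hi in
  zact (tperm i0 i1) f = - f ->
  Hqt (OmegaM (zv i0 / zv i1) * f) = 0.
Proof.
move=> i0 i1 f_anti; rewrite HqtE.
apply: (sum_group_anti_eq0 (s := tperm i0 i1)); first by rewrite natr_RF_eq0.
by move=> w; rewrite -zactMg zact_tperm_Hqt_summand // rmorphN.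
Qed.
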